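(* Let $d\ge1$ and let $G:\mathbb{R}^d\to\mathbb{R}$ satisfy: $G\ge 0$ and $\mathrm{supp}(G)=\mathbb{R}^d$; $G\in W^{1,1}(\mathbb{R}^d)\cap L^\infty(\mathbb{R}^d)\cap C^2(\mathbb{R}^d)$; $G(x)=g(|x|)$ with $g'(r)<0$ for all $r>0$, $g''(0)<0$, $\lim_{r\to+\infty}g(r)=0$; and $\int_{\mathbb{R}^d}G\,dx=1$. Let $0<\varepsilon<1$ and $$E[\rho]=\frac{\varepsilon}{2}\int_{\mathbb{R}^d}\rho^2\,dx-\frac12\int_{\mathbb{R}^d}\int_{\mathbb{R}^d}G(x-y)\rho(x)\rho(y)\,dy\,dx.$$ Then $\inf_{\rho\in\mathcal{P}\cap L^2(\mathbb{R}^d)}E[\rho]<0$.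
   Context: $\mathcal{P}=\{\rho\in L^1(\mathbb{R}^d):\rho\ge0,\ \int_{\mathbb{R}^d}\rho\,dx=1\}$. $\varepsilon>0$ is a diffusion constant. *)

From mathcomp Require Import all_boot all_algebra.
From mathcomp Require Import all_classical all_reals all_analysis.
Import numFieldNormedType.Exports.
Import GRing.Theory Num.Theory.

Set Implicit Arguments.
Unset Strict Implicit.
Unset Printing Implicit Defensive.

Local Open Scope classical_set_scope.
Local Open Scope ring_scope.

Section Defs.
Variable R : realType.

(* Iterated Lebesgue integral of a [0,+oo]-valued function of the first n
   real coordinates: integrate coordinate n-1 last (outermost).  For
   nonnegative Borel functions this is the Lebesgue integral on R^n
   (Tonelli). *)
Fixpoint iint (n : nat) (f : (nat -> R) -> \bar R) : \bar R :=
  match n with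
  | 0 => f (fun _ => 0)
  | n'.+1 => (\int[@lebesgue_measure R]_t
                iint n' (fun x => f (fun k => if k == n' then t else x k)))%E
  end.

Definition intRd (d : nat) (F : 'rV[R]_d -> \bar R) : \bar R :=
  iint d (fun x => F (\row_(i < d) x i)).

Definition enorm (d : nat) (x : 'rV[R]_d) : R :=
  Num.sqrt (\sum_(i < d) x ord0 i ^+ 2).

Definition evec (d : nat) (i : 'I_d) : 'rV[R]_d := delta_mx ord0 i.

Definition borel_fun (d : nat) (f : 'rV[R]_d -> R) : Prop :=
  forall B : set R, open B -> <<s [set: 'rV[R]_d], open >> (f @^-1` B).

Definition C2 (d : nat) (f : 'rV[R]_d -> R) : Prop :=
  continuous f /\
  (forall i x, derivable f x (evec i)) /\
  (forall i, continuous ('D_(evec i) f)) /\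
  (forall i j x, derivable ('D_(evec j) f) x (evec i)) /\
  (forall i j, continuous ('D_(evec i) ('D_(evec j) f))).

(* G in W^{1,1}(R^d) for a C^1 function G: G and its (classical = weak)
   partial derivatives are integrable. *)
Definition W11 (d : nat) (f : 'rV[R]_d -> R) : Prop :=
  (intRd (fun x => `|f x|%:E) < +oo)%E /\
  forall i, (intRd (fun x => `|'D_(evec i) f x|%:E) < +oo)%E.

(* G in L^infty: the library's [bounded_fun] (G is continuous, so ess sup = sup). *)

Definition PL2 (d : nat) : set ('rV[R]_d -> R) :=
  [set rho | borel_fun rho /\ (forall x, 0 <= rho x) /\
             intRd (fun x => (rho x)%:E) = 1%E /\
             (intRd (fun x => (rho x ^+ 2)%:E) < +oo)%E].

Definition energy (d : nat) (eps : R) (G : 'rV[R]_d -> R)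
    (rho : 'rV[R]_d -> R) : \bar R :=
  ((eps / 2)%:E * intRd (fun x => (rho x ^+ 2)%:E)
   - (1 / 2)%:E * intRd (fun x => intRd (fun y =>
                      (G (x - y) * rho x * rho y)%:E)))%E.

End Defs.

From mathcomp Require Import all_boot all_algebra.
From mathcomp Require Import all_classical all_reals all_analysis.
From mathcomp Require Import measurable_realfun ring lra.
Import numFieldNormedType.Exports.
Import order.Order.TTheory GRing.Theory Num.Theory.

Set Implicit Arguments.
Unset Strict Implicit.
Unset Printing Implicit Defensive.

Local Open Scope classical_set_scope.
Local Open Scope ring_scope.

(* Test the energy on the uniform density rho = L^-d on the cube [0, L]^d, so
   that \int rho^2 = L^-d.  Since \int G = 1, some cube [-M, M]^d carries more
   than (1 + eps)/2 of the mass of G.  For x in the inner cube [M, L - M]^d the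
   cube x - [-M, M]^d lies inside [0, L]^d, so the interaction term is at least
   L^-2d (L - 2M)^d (1 + eps)/2 = L^-d (1 - 2M/L)^d (1 + eps)/2.  By Bernoulli's
   inequality (1 - 2M/L)^d >= (1 + eps)/2 for L large, and the energy is then
   below L^-d (eps - ((1 + eps)/2)^2)/2 < 0. *)

Section IteratedIntegral.
Variable R : realType.
Local Notation mu := (@lebesgue_measure R).
Local Notation RR := (measurableTypeR R).

Definition upd (x : nat -> R) (n : nat) (t : R) : nat -> R :=
  fun k => if k == n then t else x k.

Lemma iintS n (f : (nat -> R) -> \bar R) :
  iint n.+1 f = (\int[mu]_t iint n (fun x => f (upd x n t)))%E.
Proof. by []. Qed.

Lemma eq_iint n (f g : (nat -> R) -> \bar R) :
  (forall x, f x = g x) -> iint n f = iint n g.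
Proof. by move=> fg; congr iint; apply: funext. Qed.

Lemma iint_ge0 n (f : (nat -> R) -> \bar R) :
  (forall x, 0 <= f x)%E -> (0 <= iint n f)%E.
Proof.
elim: n f => [|n IH] f f0 //=.
by apply: integral_ge0 => t _; exact: IH.
Qed.

(* No measurability is needed: the integral of a nonnegative function is the
   supremum of the integrals of the simple functions below it. *)
Lemma ge0_le_integralT (f g : RR -> \bar R) : (forall x, 0 <= f x)%E ->
  (forall x, f x <= g x)%E -> (\int[mu]_x f x <= \int[mu]_x g x)%E.
Proof.
move=> f0 fg.
have g0 x : (0 <= g x)%E by exact: le_trans (f0 x) (fg x).
rewrite (ge0_integralTE _ f0) (ge0_integralTE _ g0).
apply: ereal_sup_le => _ [h hf <-]; exists h => //= x.
exact: le_trans (hf x) (fg x).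
Qed.

Lemma le_iint n (f g : (nat -> R) -> \bar R) : (forall x, 0 <= f x)%E ->
  (forall x, f x <= g x)%E -> (iint n f <= iint n g)%E.
Proof.
elim: n f g => [|n IH] f g f0 fg //=.
apply: ge0_le_integralT => t; first exact: iint_ge0.
exact: IH.
Qed.

(* [pmeasurable n T h]: the map (t, x_(n-1), ..., x_0) |-> h t x is measurable
   on T * R * ... * R, the coordinates of x beyond n being set to 0.  This is
   what makes the sections integrated by [iint] measurable. *)
Fixpoint pmeasurable (n : nat) : forall (dd : measure_display)
    (T : measurableType dd), (T -> (nat -> R) -> R) -> Prop :=
  match n with
  | 0 => fun dd T h => measurable_fun setT (fun t => h t (fun _ => 0))
  | n'.+1 => fun dd T h =>
     @pmeasurable n' _ (T * RR)%type (fun p x => h p.1 (upd x n' p.2))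
  end.
Arguments pmeasurable n {dd} T h.

Definition nmeasurable n (f : (nat -> R) -> R) := pmeasurable n RR (fun _ => f).

Lemma eq_pmeasurable n dd (T : measurableType dd) (h h' : T -> (nat -> R) -> R) :
  (forall t x, h t x = h' t x) -> pmeasurable n T h -> pmeasurable n T h'.
Proof.
elim: n dd T h h' => [|n IH] dd T h h' e /=.
  by apply: eq_measurable_fun => t _; rewrite e.
by apply: IH => p x; rewrite e.
Qed.

Lemma pmeasurable_comp_param n dd (T : measurableType dd) dd'
    (T' : measurableType dd') (k : T' -> T) h :
  measurable_fun setT k -> pmeasurable n T h -> pmeasurable n T' (fun t => h (k t)).
Proof.
elim: n dd T dd' T' k h => [|n IH] dd T dd' T' k h mk /=.
  by move=> mh; exact: measurableT_comp mh mk.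
apply: (IH _ _ _ _ (fun p : T' * RR => (k p.1, p.2))).
apply/measurable_fun_pairP; split => /=; last exact: measurable_snd.
exact: measurableT_comp mk measurable_fst.
Qed.

Lemma pmeasurable_cst n dd (T : measurableType dd) (c : T -> R) :
  measurable_fun setT c -> pmeasurable n T (fun t _ => c t).
Proof.
elim: n dd T c => [|n IH] dd T c mc //=.
apply: (IH _ _ (fun p : T * RR => c p.1)).
exact: measurableT_comp mc measurable_fst.
Qed.

Lemma pmeasurable_coord n i dd (T : measurableType dd) :
  pmeasurable n T (fun _ x => x i).
Proof.
elim: n dd T => [|n IH] dd T /=; first exact: measurable_cst.
rewrite /upd; case: eqP => _; last exact: IH.
exact: (@pmeasurable_cst n _ (T * RR)%type (fun p => p.2) measurable_snd).
Qed.

Lemma pmeasurableD n dd (T : measurableType dd) (h1 h2 : T -> (nat -> R) -> R) :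
  pmeasurable n T h1 -> pmeasurable n T h2 ->
  pmeasurable n T (fun t x => h1 t x + h2 t x).
Proof.
elim: n dd T h1 h2 => [|n IH] dd T h1 h2 /=; last exact: IH.
exact: measurable_funD.
Qed.

Lemma pmeasurableM n dd (T : measurableType dd) (h1 h2 : T -> (nat -> R) -> R) :
  pmeasurable n T h1 -> pmeasurable n T h2 ->
  pmeasurable n T (fun t x => h1 t x * h2 t x).
Proof.
elim: n dd T h1 h2 => [|n IH] dd T h1 h2 /=; last exact: IH.
exact: measurable_funM.
Qed.

Lemma pmeasurable_comp n (phi : R -> R) dd (T : measurableType dd)
    (h : T -> (nat -> R) -> R) :
  measurable_fun setT phi -> pmeasurable n T h ->
  pmeasurable n T (fun t x => phi (h t x)).
Proof.
move=> mphi; elim: n dd T h => [|n IH] dd T h /=; last exact: IH.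
by move=> mh; exact: measurableT_comp mphi mh.
Qed.

Lemma pmeasurable_sum n m dd (T : measurableType dd)
    (F : 'I_m -> T -> (nat -> R) -> R) :
  (forall i, pmeasurable n T (F i)) ->
  pmeasurable n T (fun t x => \sum_(i < m) F i t x).
Proof.
elim: m F => [|m IH] F mF.
  apply: eq_pmeasurable (pmeasurable_cst n (measurable_cst (0 : R))) => t x.
  by rewrite big_ord0.
have := pmeasurableD (IH (fun i => F (widen_ord (leqnSn m) i)) (fun i => mF _))
  (mF ord_max).
by apply: eq_pmeasurable => t x; rewrite big_ord_recr.
Qed.

Lemma pmeasurable_prod n m dd (T : measurableType dd)
    (F : 'I_m -> T -> (nat -> R) -> R) :
  (forall i, pmeasurable n T (F i)) ->
  pmeasurable n T (fun t x => \prod_(i < m) F i t x).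
Proof.
elim: m F => [|m IH] F mF.
  apply: eq_pmeasurable (pmeasurable_cst n (measurable_cst (1 : R))) => t x.
  by rewrite big_ord0.
have := pmeasurableM (IH (fun i => F (widen_ord (leqnSn m) i)) (fun i => mF _))
  (mF ord_max).
by apply: eq_pmeasurable => t x; rewrite big_ord_recr.
Qed.

Lemma measurable_iint n dd (T : measurableType dd) (h : T -> (nat -> R) -> R) :
  pmeasurable n T h -> (forall t x, 0 <= h t x) ->
  measurable_fun setT (fun t => iint n (fun x => (h t x)%:E)).
Proof.
elim: n dd T h => [|n IH] dd T h /= mh h0; first exact/measurable_EFinP.
have F0 (p : T * RR) : (0 <= iint n (fun x => (h p.1 (upd x n p.2))%:E))%E.
  by apply: iint_ge0 => x; rewrite lee_fin.
exact: measurable_fun_fubini_tonelli_F (IH _ _ _ mh (fun p x => h0 _ _)) F0.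
Qed.

Lemma nmeasurable_upd n f s :
  nmeasurable n.+1 f -> nmeasurable n (fun x => f (upd x n s)).
Proof.
apply: (@pmeasurable_comp_param n _ (RR * RR)%type _ RR (fun t => (t, s))).
by apply/measurable_fun_pairP; split; [exact: measurable_id|exact: measurable_cst].
Qed.

Lemma measurable_iint_upd n f : nmeasurable n.+1 f -> (forall x, 0 <= f x) ->
  measurable_fun setT (fun s : RR => iint n (fun x => (f (upd x n s))%:E)).
Proof.
move=> mf f0; apply: measurable_iint => //.
have mdiag : measurable_fun setT (fun t : RR => (t, t)).
  by apply/measurable_fun_pairP; split; exact: measurable_id.
exact: (@pmeasurable_comp_param n _ (RR * RR)%type _ RR _ _ mdiag mf).
Qed.

Lemma iintZl n (f : (nat -> R) -> R) (c : R) : 0 <= c -> nmeasurable n f ->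
  (forall x, 0 <= f x) ->
  iint n (fun x => (c * f x)%:E) = (c%:E * iint n (fun x => (f x)%:E))%E.
Proof.
elim: n f => [|n IH] f c0 mf f0 //=.
transitivity (\int[mu]_t (c%:E * iint n (fun x => (f (upd x n t))%:E)))%E.
  by apply: eq_integral => t _; apply: IH => //; exact: nmeasurable_upd.
apply: ge0_integralZl => //; first exact: measurable_iint_upd.
by move=> t _; apply: iint_ge0 => x; rewrite lee_fin.
Qed.

Lemma iint_monotone_convergence n (h : nat -> (nat -> R) -> R) (hl : (nat -> R) -> R) :
  (forall k, nmeasurable n (h k)) -> (forall k x, 0 <= h k x) ->
  (forall x, nondecreasing_seq (h ^~ x)) -> (forall x, h ^~ x @ \oo --> hl x) ->
  iint n (fun x => (hl x)%:E) = limn (fun k => iint n (fun x => (h k x)%:E)).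
Proof.
elim: n h hl => [|n IH] h hl mh h0 hnd hcvg.
  rewrite /= (EFin_lim (f := h ^~ (fun _ => 0))); first by rewrite (cvg_lim _ (hcvg _)).
  by apply/cvg_ex; exists (hl (fun _ => 0)); exact: hcvg.
rewrite iintS.
transitivity (\int[mu]_t limn (fun k => iint n (fun x => (h k (upd x n t))%:E)))%E.
  apply: eq_integral => t _; apply: IH => // k.
  exact: nmeasurable_upd.
apply: monotone_convergence => //.
- by move=> k; exact: measurable_iint_upd.
- by move=> k t _; apply: iint_ge0 => x; rewrite lee_fin.
- by move=> t _ k1 k2 k12; apply: le_iint => x; rewrite ?lee_fin // hnd.
Qed.

Lemma ge0_integral_reflect (Phi : RR -> \bar R) (a : R) : measurable_fun setT Phi ->
  (forall t, 0 <= Phi t)%E -> (\int[mu]_t Phi (a - t)%R = \int[mu]_t Phi t)%E.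
Proof.
move=> mPhi Phi0.
pose psi : RR -> RR := fun t => a - t.
have mpsi : measurable_fun setT psi.
  by apply: measurable_funB; [exact: measurable_cst|exact: measurable_id].
have mu_psi A : measurable A -> mu A = pushforward mu psi A.
  apply: lebesgue_measure_unique => _ [[u v]] _ <-.
  change (mu `]u, v]%classic = mu (psi @^-1` `]u, v]%classic)).
  have -> : psi @^-1` `]u, v]%classic = `[a - v, a - u[%classic.
    by apply/seteqP; split => x /=; rewrite !in_itv /= /psi => /andP[? ?];
      apply/andP; split; lra.
  rewrite !lebesgue_measure_itv /= !lte_fin.
  have -> : (a - v < a - u) = (u < v) by apply/idP/idP => ?; lra.
  by case: (u < v) => //; congr (_%:E); lra.
rewrite [RHS](eq_measure_integral (pushforward mu psi)); last first.
  by move=> A mA _; exact: mu_psi.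
by rewrite ge0_integral_pushforward.
Qed.

Lemma iint_reflect n (f : (nat -> R) -> R) (a : nat -> R) :
  nmeasurable n f -> (forall x, 0 <= f x) ->
  (forall x y, (forall k, (k < n)%N -> x k = y k) -> f x = f y) ->
  iint n (fun x => (f (fun k => a k - x k))%:E) = iint n (fun x => (f x)%:E).
Proof.
elim: n f => [|n IH] f mf f0 fdep; first by congr (_%:E); exact: fdep.
rewrite iintS.
transitivity (\int[mu]_t iint n (fun x => (f (upd x n (a n - t)))%:E))%E.
  apply: eq_integral => t _.
  rewrite -(IH (fun y => f (upd y n (a n - t)))); last 3 first.
  - exact: nmeasurable_upd.
  - by move=> x; exact: f0.
  - move=> x y xy; apply: fdep => k kn; rewrite /upd; case: eqP => // /eqP kNn.
    by apply: xy; rewrite ltn_neqAle kNn -ltnS.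
  apply: eq_iint => x; congr (f _)%:E; apply: funext => k.
  by rewrite /upd; case: eqP => // ->.
rewrite (ge0_integral_reflect
  (Phi := fun s => iint n (fun x => (f (upd x n s))%:E))) //.
- exact: measurable_iint_upd.
- by move=> s; apply: iint_ge0 => x; rewrite lee_fin.
Qed.

Definition ind (a b : R) : R -> R := \1_(`[a, b]%classic).

Lemma indE a b r : ind a b r = if a <= r <= b then 1 else 0.
Proof. by rewrite /ind indicE mem_setE in_itv /=; case: ifP. Qed.

Lemma prod_indE m a b (x : 'I_m -> R) :
  \prod_(i < m) ind a b (x i) = if [forall i, a <= x i <= b] then 1 else 0.
Proof.
case: ifP => [/forallP xab|/negbT]; first by apply: big1 => i _; rewrite indE xab.
rewrite negb_forall => /existsP[i xNab].
by rewrite (bigD1 i) //= indE (negbTE xNab) mul0r.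
Qed.

Definition box m a b (x : nat -> R) : R := \prod_(i < m) ind a b (x i).

Lemma boxE m a b x : box m a b x = if [forall i : 'I_m, a <= x i <= b] then 1 else 0.
Proof. exact: prod_indE. Qed.

Lemma box_ge0 m a b x : 0 <= box m a b x.
Proof. by rewrite boxE; case: ifP. Qed.

Lemma box_le1 m a b x : box m a b x <= 1.
Proof. by rewrite boxE; case: ifP. Qed.

Lemma le_box m a b a' b' x : a' <= a -> b <= b' -> box m a b x <= box m a' b' x.
Proof.
move=> a'a bb'; rewrite !boxE; case: ifP => [/forallP xin|]; last by case: ifP.
rewrite ifT //; apply/forallP => i; have /andP[? ?] := xin i.
by apply/andP; split; lra.
Qed.

Lemma pmeasurable_box n m a b dd (T : measurableType dd) :
  pmeasurable n T (fun _ => box m a b).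
Proof.
apply: pmeasurable_prod => i; apply: pmeasurable_comp (pmeasurable_coord n i T).
exact: measurable_indic.
Qed.

Lemma nmeasurable_radial n m (phi : R -> R) : measurable_fun setT phi ->
  nmeasurable n (fun z => phi (\sum_(i < m) z i ^+ 2)).
Proof.
move=> mphi; apply: pmeasurable_comp mphi _; apply: pmeasurable_sum => i.
exact: pmeasurable_comp (@exprn_measurable R setT 2) (pmeasurable_coord n i RR).
Qed.

Lemma iint_box n (a b c : R) : a <= b ->
  iint n (fun x => (c * box n a b x)%:E) = (c * (b - a) ^+ n)%:E.
Proof.
elim: n c => [|n IH] c ab; first by rewrite /= /box big_ord0 expr0.
rewrite iintS.
transitivity (\int[mu]_t ((c * (b - a) ^+ n)%:E * (\1_(`[a, b]%classic) t)%:E))%E.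
  apply: eq_integral => t _; rewrite -EFinM mulrAC -IH //.
  apply: eq_iint => x; rewrite /box big_ord_recr /= /upd eqxx mulrA mulrAC.
  congr (_ * _)%:E; apply: eq_bigr => i _.
  by rewrite ifN // neq_ltn ltn_ord.
rewrite integralZl //; last exact: (integrable_indic_itv a b true false).
rewrite integral_indic // setIT; have /= -> := lebesgue_measure_itv `[a, b].
rewrite lte_fin.
case: ltgtP ab => // [ab _|-> _]; first by rewrite -EFinD -EFinM exprSr mulrA.
by rewrite mule0 subrr expr0n /= mulr0.
Qed.

End IteratedIntegral.

Lemma borel_fun_scaled_indic (R : realType) d (Q : set 'rV[R]_d) (c : R) :
  closed Q -> borel_fun (fun v => c * \1_Q v).
Proof.
move=> cQ B _.
pose S := <<s [set: 'rV[R]_d], open >>.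
have SQC : S (~` Q) by apply: sub_sigma_algebra; exact: closed_openC.
have SQ : S Q by have := sigma_algebraCD SQC; rewrite setTD setCK.
have S0 : S set0 by exact: sigma_algebra0.
have ST : S setT by have := sigma_algebraCD S0; rewrite setD0.
have valE v : c * \1_Q v = if v \in Q then c else 0.
  by rewrite indicE; case: (v \in Q); rewrite ?mulr1 ?mulr0.
have [Bc|NBc] := pselect (B c); have [B0|NB0] := pselect (B 0).
- suff -> : (fun v => c * \1_Q v) @^-1` B = setT by [].
  by apply/seteqP; split => v //= _; rewrite valE; case: ifP.
- suff -> : (fun v => c * \1_Q v) @^-1` B = Q by [].
  apply/seteqP; split => v; rewrite /preimage /= valE; last by move/mem_set => ->.
  by case: ifPn => [/set_mem|_ /NB0].
- suff -> : (fun v => c * \1_Q v) @^-1` B = ~` Q by [].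
  apply/seteqP; split => v; rewrite /preimage /= valE.
    by case: ifPn => [_ /NBc|/negP vNQ _ /mem_set /vNQ].
  by move=> vNQ; rewrite memNset.
- suff -> : (fun v => c * \1_Q v) @^-1` B = set0 by [].
  by apply/seteqP; split => v //=; rewrite valE; case: ifP.
Qed.

Lemma bernoulli_ineq (R : realFieldType) n (u : R) :
  0 <= u <= 1 -> 1 - n%:R * u <= (1 - u) ^+ n.
Proof.
case/andP => u0 u1; elim: n => [|n IH]; first by rewrite expr0 mul0r subr0.
rewrite exprS -natr1.
have n0 : 0 <= (n%:R : R) by [].
apply: (@le_trans _ _ ((1 - u) * (1 - n%:R * u))); first nra.
by apply: ler_wpM2l => //; lra.
Qed.

Lemma cube_energy_lt (R : realFieldType) n (eps m M L : R) : (0 < n)%N ->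
  0 < eps -> eps < 1 -> (1 + eps) / 2 < m -> 0 <= M -> 0 < L ->
  4 * M * n%:R <= (1 - eps) * L ->
  eps / 2 * (L ^+ n)^-1 < 1 / 2 * ((L ^+ n)^-1 ^+ 2 * m * (L - 2 * M) ^+ n).
Proof.
move=> n_gt0 eps_gt0 eps_lt1 m_gt M_ge0 L_gt0 L_large.
have n_ge1 : 1 <= (n%:R : R) by rewrite ler1n.
pose u := 2 * M / L.
have u_ge0 : 0 <= u by rewrite divr_ge0 //; lra.
have uL : u * L = 2 * M by rewrite mulfVK // gt_eqF.
have nu : n%:R * u <= (1 - eps) / 2.
  by rewrite -(ler_pM2r L_gt0) -mulrA uL; lra.
have u_le1 : u <= 1 by nra.
have shrink : (1 + eps) / 2 <= (1 - u) ^+ n.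
  by apply: le_trans (bernoulli_ineq n (u:=u) _); [lra|apply/andP].
have -> : L - 2 * M = L * (1 - u) by rewrite -uL; ring.
set c := (L ^+ n)^-1.
have c_gt0 : 0 < c by rewrite invr_gt0 exprn_gt0.
have -> : c ^+ 2 * m * (L * (1 - u)) ^+ n = c * (m * (1 - u) ^+ n).
  by rewrite /c exprMn; field; rewrite expf_neq0 // gt_eqF.
suff : eps < m * (1 - u) ^+ n by nra.
apply: lt_le_trans (_ : (1 + eps) / 2 * ((1 + eps) / 2) <= _); first nra.
by apply: ler_pM => //; lra.
Qed.

Section NegativeEnergy.
Variables (R : realType) (d : nat) (G : 'rV[R]_d -> R).
Hypotheses (G_ge0 : forall x, 0 <= G x)
  (mG : nmeasurable d (fun z => G (\row_i z i))).

Lemma nmeasurable_G_box M : nmeasurable d (fun z => G (\row_i z i) * box d (- M) M z).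
Proof. exact: pmeasurableM mG (pmeasurable_box _ _ _ _ _). Qed.

Lemma G_box_mass_le1 M : intRd (fun x => (G x)%:E) = 1%E ->
  (iint d (fun z => (G (\row_i z i) * box d (- M) M z)%:E) <= 1)%E.
Proof.
move=> <-; apply: le_iint => z; rewrite lee_fin ?mulr_ge0 ?box_ge0 //.
by rewrite ler_piMr // box_le1.
Qed.

(* Monotone convergence along the cubes [-k, k]^d. *)
Lemma G_box_mass_gt e : intRd (fun x => (G x)%:E) = 1%E -> e < 1 ->
  exists2 M : R, 0 <= M &
    (e%:E < iint d (fun z => (G (\row_i z i) * box d (- M) M z)%:E))%E.
Proof.
move=> G_int e_lt1.
pose h (k : nat) (z : nat -> R) := G (\row_i z i) * box d (- k%:R) k%:R z.
have h_ge0 k z : 0 <= h k z by rewrite mulr_ge0 ?box_ge0.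
have h_nd z : nondecreasing_seq (h ^~ z).
  move=> k1 k2 k12; apply: ler_wpM2l => //.
  by apply: le_box; rewrite ?lerN2 ler_nat.
have h_cvg z : h ^~ z @ \oo --> G (\row_i z i).
  apply: cvg_near_cst; exists (Num.truncn (\sum_(i < d) `|z i|)).+1 => // k /= zk.
  have zk' : \sum_(i < d) `|z i| <= k%:R.
    by apply: le_trans (ltW (truncnS_gt _)) _; rewrite ler_nat.
  rewrite /h boxE ifT ?mulr1 //; apply/forallP => i; rewrite -ler_norml.
  by apply: le_trans zk'; rewrite (bigD1 i) //= lerDl sumr_ge0.
have := iint_monotone_convergence (fun k => nmeasurable_G_box k%:R) h_ge0 h_nd h_cvg.
have h_iint_nd : nondecreasing_seq (fun k => iint d (fun x => (h k x)%:E)).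
  by move=> k1 k2 k12; apply: le_iint => x; rewrite lee_fin ?h_ge0 ?h_nd.
rewrite (cvg_lim _ (ereal_nondecreasing_cvgn h_iint_nd)) // => mass.
have : (e%:E < ereal_sup (range (fun k => iint d (fun x => (h k x)%:E))))%E.
  by rewrite -mass; move: G_int; rewrite /intRd => ->; rewrite lte_fin.
by case/ereal_sup_gt => _ [k _ <-] ek; exists k%:R.
Qed.

Lemma box_shift_le m M L (x y : nat -> R) :
  box m M (L - M) x * box m (- M) M (fun k => x k - y k) <= box m 0 L y.
Proof.
rewrite !boxE; case: ifP => [/forallP xin|]; last by rewrite mul0r; case: ifP.
case: ifP => [/forallP xyin|]; last by rewrite mulr0; case: ifP.
rewrite ifT //; apply/forallP => i.
by have /andP[? ?] := xin i; have /andP[? ?] := xyin i; apply/andP; split; lra.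
Qed.

Section CubeDensity.
Variable L : R.
Hypothesis L_gt0 : 0 < L.

Definition cube_density (v : 'rV[R]_d) : R :=
  (L ^+ d)^-1 * \prod_(i < d) ind 0 L (v ord0 i).

Lemma cube_density_row (z : nat -> R) :
  cube_density (\row_i z i) = (L ^+ d)^-1 * box d 0 L z.
Proof. by congr (_ * _); apply: eq_bigr => i _; rewrite mxE. Qed.

Lemma cube_density_ge0 v : 0 <= cube_density v.
Proof.
apply: mulr_ge0; first by rewrite invr_ge0 exprn_ge0 // ltW.
by rewrite prod_indE; case: ifP.
Qed.

Lemma intRd_cube_density : intRd (fun x => (cube_density x)%:E) = 1%E.
Proof.
rewrite /intRd (eq_iint _ (fun x => congr1 EFin (cube_density_row x))).
by rewrite iint_box ?ltW // subr0 mulVf // expf_neq0 // gt_eqF.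
Qed.

Lemma intRd_cube_density_sqr :
  intRd (fun x => (cube_density x ^+ 2)%:E) = ((L ^+ d)^-1)%:E.
Proof.
rewrite /intRd (@eq_iint _ _ _ (fun x => ((L ^+ d)^-1 ^+ 2 * box d 0 L x)%:E)).
  rewrite iint_box ?ltW // subr0 expr2 -mulrA mulVf ?mulr1 //.
  by rewrite expf_neq0 // gt_eqF.
move=> x; rewrite cube_density_row exprMn; congr (_ * _)%:E.
by rewrite boxE; case: ifP; rewrite ?expr1n ?expr0n.
Qed.

Lemma closed_cube : closed [set v : 'rV[R]_d | forall i, 0 <= v ord0 i <= L].
Proof.
have -> : [set v : 'rV[R]_d | forall i, 0 <= v ord0 i <= L] =
    \bigcap_(i in [set: 'I_d]) ((fun v : 'rV[R]_d => v ord0 i) @^-1` `[0, L]%classic).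
  apply/seteqP; split => v /= vin i; first by rewrite /= in_itv /= vin.
  by have := vin i I; rewrite /= in_itv.
apply: closed_bigI => i _; apply: preimage_closed; last exact: interval_closed.
by move=> v _; exact: coord_continuous.
Qed.

Lemma PL2_cube_density : PL2 cube_density.
Proof.
split; last split; [|exact: cube_density_ge0|].
  have -> : cube_density = fun v => (L ^+ d)^-1 *
      \1_[set v : 'rV[R]_d | forall i, 0 <= v ord0 i <= L] v.
    apply: funext => v; rewrite /cube_density prod_indE indicE.
    by congr (_ * _); case: ifP => [/forallP|/negbT/forallPn[i /negP]] vin;
      [rewrite mem_set|rewrite memNset //= => /(_ i)].
  by apply: borel_fun_scaled_indic; exact: closed_cube.
by rewrite intRd_cube_density intRd_cube_density_sqr ltry.
Qed.

Variables (M m : R).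
Hypotheses (M_ge0 : 0 <= M) (ML : 2 * M <= L)
  (G_box_mass : iint d (fun z => (G (\row_i z i) * box d (- M) M z)%:E) = m%:E).

Lemma conv_cube_density_ge (x : nat -> R) : box d M (L - M) x = 1 ->
  (((L ^+ d)^-1 ^+ 2 * m)%:E <= intRd (fun y =>
     (G (\row_i x i - y) * cube_density (\row_i x i) * cube_density y)%:E))%E.
Proof.
move=> xin; set c := (L ^+ d)^-1.
have c_ge0 : 0 <= c by rewrite invr_ge0 exprn_ge0 ?ltW.
pose f (z : nat -> R) := c ^+ 2 * (G (\row_i z i) * box d (- M) M z).
have f_ge0 z : 0 <= f z by rewrite mulr_ge0 ?exprn_ge0 ?mulr_ge0 ?box_ge0.
have mf : nmeasurable d f.
  exact: pmeasurableM (pmeasurable_cst _ (measurable_cst _)) (nmeasurable_G_box M).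
have fdep z z' : (forall k, (k < d)%N -> z k = z' k) -> f z = f z'.
  move=> zz'; rewrite /f /box; congr (_ * (G _ * _)).
    by apply/matrixP => i j; rewrite !mxE zz'.
  by apply: eq_bigr => i _; rewrite zz'.
have -> : ((c ^+ 2 * m)%:E = iint d (fun y => (f (fun k => x k - y k))%:E))%E.
  rewrite iint_reflect // /f iintZl ?exprn_ge0 ?G_box_mass //.
    exact: nmeasurable_G_box.
  by move=> z; rewrite mulr_ge0 ?box_ge0.
rewrite /intRd; apply: le_iint => y; first by rewrite lee_fin.
have x0L : box d 0 L x = 1.
  by apply/le_anti; rewrite box_le1 -[X in X <= _]xin le_box // gerBl.
rewrite lee_fin !cube_density_row x0L mulr1 -/c /f.
have -> : \row_i x i - \row_i y i = \row_i (x i - y i) :> 'rV[R]_d.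
  by apply/matrixP => i j; rewrite !mxE.
rewrite [X in _ <= X](_ : _ = c ^+ 2 * (G (\row_i (x i - y i)) * box d 0 L y));
  last by ring.
rewrite ler_wpM2l ?exprn_ge0 // ler_wpM2l //.
by apply: le_trans (box_shift_le d M L x y); rewrite xin mul1r.
Qed.

Lemma interaction_cube_density_ge :
  (((L ^+ d)^-1 ^+ 2 * m * (L - 2 * M) ^+ d)%:E <=
    intRd (fun x => intRd (fun y =>
      (G (x - y) * cube_density x * cube_density y)%:E)))%E.
Proof.
have m_ge0 : 0 <= m.
  by rewrite -lee_fin -G_box_mass iint_ge0 // => z; rewrite lee_fin mulr_ge0 ?box_ge0.
rewrite (_ : L - 2 * M = L - M - M); last lra.
rewrite -iint_box; last by rewrite lerBrDr -mulr2n -mulr_natl.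
apply: le_iint => x.
  rewrite lee_fin mulr_ge0 ?box_ge0 // mulr_ge0 // exprn_ge0 //.
  by rewrite invr_ge0 exprn_ge0 // ltW.
have [xin|xout] := eqVneq (box d M (L - M) x) 1.
  by rewrite xin mulr1; exact: conv_cube_density_ge.
have -> : box d M (L - M) x = 0.
  by move: xout; rewrite boxE; case: ifP => // _; rewrite eqxx.
rewrite mulr0 iint_ge0 // => y.
rewrite lee_fin; apply: mulr_ge0; first apply: mulr_ge0.
- exact: G_ge0.
- exact: cube_density_ge0.
- exact: cube_density_ge0.
Qed.

End CubeDensity.

Lemma exists_energy_lt0 eps : (0 < d)%N -> intRd (fun x => (G x)%:E) = 1%E ->
  0 < eps -> eps < 1 -> exists2 rho, PL2 rho & (energy eps G rho < 0)%E.
Proof.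
move=> d_gt0 G_int eps_gt0 eps_lt1.
have [M M_ge0 mass_gt] := @G_box_mass_gt ((1 + eps) / 2) G_int ltac:(lra).
set mass := iint d _ in mass_gt.
have mass_ge0 : (0 <= mass)%E.
  by apply: iint_ge0 => z; rewrite lee_fin mulr_ge0 ?box_ge0.
have mass_fin : mass = (fine mass)%:E.
  by rewrite fineK // ge0_fin_numE // (le_lt_trans (G_box_mass_le1 M G_int)) ?ltry.
pose L := 4 * M * d%:R / (1 - eps) + 1.
have L_eps : (1 - eps) * L = 4 * M * d%:R + (1 - eps).
  by rewrite /L; field; rewrite subr_eq0 gt_eqF.
have d_ge1 : 1 <= (d%:R : R) by rewrite ler1n.
have L_gt0 : 0 < L by rewrite /L ltr_pwDr ?divr_ge0 ?mulr_ge0 //; lra.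
have ML : 2 * M <= L by nra.
exists (cube_density L); first exact: PL2_cube_density.
rewrite /energy intRd_cube_density_sqr // -EFinM subre_lt0 //.
have half_ge0 : (0 <= (1 / 2)%:E :> \bar R)%E by rewrite lee_fin.
apply: lt_le_trans (lee_wpmul2l half_ge0
  (interaction_cube_density_ge L_gt0 M_ge0 ML mass_fin)).
rewrite -EFinM lte_fin cube_energy_lt //; last by rewrite L_eps lerDl; lra.
by rewrite -lte_fin -mass_fin.
Qed.

End NegativeEnergy.

Unset Implicit Arguments.

Theorem lemma3p7 (R : realType) (d : nat) (hd : (1 <= d)%N)
  (G : 'rV[R]_d -> R) (g : R -> R) (eps : R)
  (G_ge0 : forall x, 0 <= G x)
  (G_supp : closure [set x | G x != 0] = [set: 'rV[R]_d])
  (G_C2 : C2 G) (G_W11 : W11 G) (G_Linf : bounded_fun G)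
  (G_radial : forall x, G x = g (enorm x))
  (g_even : forall r, g (- r) = g r)
  (g'_neg : forall r, 0 < r -> derivable g r 1 /\ derive1 g r < 0)
  (g''0_neg : derivable g 0 1 /\ derivable (derive1 g) 0 1 /\
                derive1 (derive1 g) 0 < 0)
  (g_lim : g r @[r --> +oo] --> 0)
  (G_int : intRd (fun x => (G x)%:E) = 1%E)
  (eps_pos : 0 < eps) (eps_lt1 : eps < 1) :
  (ereal_inf [set energy eps G rho | rho in @PL2 R d] < 0)%E.
Proof.
have g_cont r : 0 <= r -> {for r, continuous g}.
  rewrite le_eqVlt => /predU1P[<-|r_gt0].
    by apply/differentiable_continuous/derivable1_diffP; case: g''0_neg.
  by apply/differentiable_continuous/derivable1_diffP; case: (g'_neg r r_gt0).
have mphi : measurable_fun setT (g \o Num.sqrt).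
  apply: continuous_measurable_fun => r; apply: continuous_comp.
    exact: sqrt_continuous.
  exact/g_cont/sqrtr_ge0.
have mG : nmeasurable d (fun z => G (\row_i z i)).
  apply: eq_pmeasurable (nmeasurable_radial d d mphi) => _ z.
  rewrite G_radial /enorm /=; congr (g (Num.sqrt _)).
  by apply: eq_bigr => i _; rewrite mxE.
have [rho rho_PL2 rho_neg] := exists_energy_lt0 G_ge0 mG hd G_int eps_pos eps_lt1.
by apply: le_lt_trans rho_neg; apply: ereal_inf_lbound; exists rho.
Qed.
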